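(* Let $d\in\mathbb{N}$. Then for any integer $k\ge19^{2d-1}+1$ and any support preserving map $F\colon S_{\ell_\infty^k}\to S_{\ell_1^k}$ (not assumed continuous), we have $\omega_F(\tfrac1d)\ge\tfrac12$. In particular, there is no sequence $(F_k\colon S_{\ell_\infty^k}\to S_{\ell_1^k})_{k=1}^\infty$ of equi-uniformly continuous support preserving maps.
   Context: $S_{\ell_p^k}$ is the unit sphere of $(\mathbb{R}^k,\|\cdot\|_p)$. $\mathrm{supp}(x)=\{i:x_i\neq0\}$; $F$ is support preserving if $\mathrm{supp}(F(x))=\mathrm{supp}(x)$ for all $x$. $\omega_F(t)=\sup\{\|F(x)-F(y)\|_1:\|x-y\|_\infty\le t\}$. A sequence $(F_k)$ is equi-uniformly continuous if for every $\varepsilon>0$ there is $\delta>0$ with $\omega_{F_k}(\delta)<\varepsilon$ for all $k$. *)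

From HB Require Import structures.
From mathcomp Require Import all_boot all_order all_algebra.
From mathcomp Require Import boolp classical_sets reals.
Set Implicit Arguments. Unset Strict Implicit. Unset Printing Implicit Defensive.
Import Order.TTheory GRing.Theory Num.Theory.
Local Open Scope ring_scope.
Local Open Scope classical_set_scope.

Definition linf_norm (R : realType) (k : nat) (x : 'I_k -> R) : R :=
  \big[Num.max/0]_(i < k) `|x i|.

Definition l1_norm (R : realType) (k : nat) (x : 'I_k -> R) : R :=
  \sum_(i < k) `|x i|.

Definition sphere_inf (R : realType) (k : nat) : set ('I_k -> R) :=
  [set x | linf_norm x = 1].

(* F maps S_{l_inf^k} into S_{l_1^k}; values of F off the sphere are irrelevant. *)
Definition maps_sphere (R : realType) (k : nat) (F : ('I_k -> R) -> ('I_k -> R)) :=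
  forall x, sphere_inf x -> l1_norm (F x) = 1.

Definition support_preserving (R : realType) (k : nat)
  (F : ('I_k -> R) -> ('I_k -> R)) :=
  forall x, sphere_inf x -> forall i, (F x i != 0) = (x i != 0).

Definition omega (R : realType) (k : nat) (F : ('I_k -> R) -> ('I_k -> R)) (t : R) : R :=
  sup [set r | exists x y, [/\ sphere_inf x, sphere_inf y,
        linf_norm (fun i => x i - y i) <= t & r = l1_norm (fun i => F x i - F y i)]].

From HB Require Import structures.
From mathcomp Require Import all_boot all_order all_algebra.
From mathcomp Require Import boolp classical_sets reals.
From mathcomp Require Import zify lra.
Set Implicit Arguments. Unset Strict Implicit. Unset Printing Implicit Defensive.
Import Order.TTheory GRing.Theory Num.Theory.
Local Open Scope ring_scope.

(* Label the coordinates by the subsets A of a 3d-element set (possible once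
   k >= 2^(3d)) and, for each subset B, let x_B have coordinate
   max(|A Δ B| - 2d, 0) / d.  Every x_B lies on the l_oo sphere (the coordinate
   A = ~B equals 1), and flipping one element t of B moves each coordinate by at
   most 1/d.  Where a coordinate of x_B is nonzero, more flips lower it than raise
   it: the signed count over t is 2|A Δ B| - 3d >= d.  Support preservation puts
   the probability vector |F x_B| on exactly these coordinates, so pairing it with
   the antisymmetric signs and summing over all B and t gives total variation at
   least 2d per B.  Averaging over the 3d flips, some pair x_B, x_(B Δ t) has
   ||F x_B - F x_(B Δ t)||_1 >= 2/3. *)

Section SymmetricDifference.
Variable T : finType.
Implicit Types (A B S : {set T}) (t : T).

Definition symdiff A B : {set T} := [set s | (s \in A) (+) (s \in B)].
Definition flip B t : {set T} := symdiff B [set t].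

Lemma symdiff_flip A B t : symdiff A (flip B t) = flip (symdiff A B) t.
Proof. by apply/setP => s; rewrite !inE addbA. Qed.

Lemma flipK t : involutive (flip^~ t).
Proof. by move=> B; apply/setP => s; rewrite !inE -addbA addbb addbF. Qed.

Lemma symdiff_setC B : symdiff (~: B) B = [set: T].
Proof. by apply/setP => s; rewrite !inE; case: (s \in B). Qed.

Lemma card_flip S t : #|flip S t| = if t \in S then #|S|.-1 else #|S|.+1.
Proof.
case: ifP => tS.
- have -> : flip S t = S :\ t.
    by apply/setP => s; rewrite !inE; case: eqVneq => [->|]; rewrite ?tS ?addbF.
  by rewrite (cardsD1 t S) tS.
- have -> : flip S t = t |: S.
    by apply/setP => s; rewrite !inE; case: eqVneq => [->|]; rewrite ?tS ?addbF ?orbF.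
  by rewrite cardsU1 tS.
Qed.

End SymmetricDifference.

Lemma exists_ge_of_sum_ge (R : realDomainType) (I : finType) (f : I -> R) (a : R) :
  (0 < #|I|)%N -> a *+ #|I| <= \sum_i f i -> exists i, a <= f i.
Proof.
case/card_gt0P=> i0 _ hsum; case: (pickP (fun i => a <= f i)) => [i|hlt]; first by exists i.
suff : \sum_i f i < \sum_(i : I) a by rewrite sumr_const ltNge hsum.
by apply: ltr_sum => [|i _]; [apply/hasP; exists i0; rewrite ?mem_index_enum | rewrite ltNge hlt].
Qed.

Lemma card_sets (T : finType) : #|{set T}| = (2 ^ #|T|)%N.
Proof.
rewrite -cardsT -card_powerset; apply: eq_card => A.
by rewrite !inE finset.subsetT.
Qed.

Lemma ord_surjection (T : finType) (k : nat) (x0 : T) :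
  (#|T| <= k)%N -> exists p : 'I_k -> T, forall x, exists i, p i = x.
Proof.
move=> hk; exists (fun i => nth x0 (enum T) i) => x.
have hi : (index x (enum T) < k)%N by rewrite (leq_trans _ hk) // cardE index_mem mem_enum.
by exists (Ordinal hi); rewrite /= nth_index ?mem_enum.
Qed.

Lemma exists_inv_nat_le (R : archiFieldType) (delta : R) :
  0 < delta -> exists2 d, (0 < d)%N & d%:R^-1 <= delta.
Proof.
move=> delta_gt0; exists (Num.bound delta^-1).+1 => //.
rewrite -[leRHS]invrK lef_pV2 ?posrE ?invr_gt0 ?ltr0n //.
by rewrite ltW // (lt_le_trans (archi_boundP _)) ?ler_nat ?invr_ge0 ?ltW.
Qed.

Section Norms.
Variables (R : realType) (k : nat).
Implicit Types (x y : 'I_k -> R).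

Lemma linf_norm_le x b : 0 <= b -> (forall i, `|x i| <= b) -> linf_norm x <= b.
Proof.
by move=> b_ge0 hx; rewrite /linf_norm; elim/big_ind: _ => // u v hu hv; rewrite ge_max hu hv.
Qed.

Lemma ler_linf_norm x i : `|x i| <= linf_norm x.
Proof. by rewrite /linf_norm (bigD1 i) //= le_max lexx. Qed.

Lemma l1_dist_le_omega (F : ('I_k -> R) -> 'I_k -> R) t x y :
  maps_sphere F -> sphere_inf x -> sphere_inf y ->
  linf_norm (fun i => x i - y i) <= t ->
  l1_norm (fun i => F x i - F y i) <= omega F t.
Proof.
move=> F_sphere sx sy hxy; apply: ub_le_sup; last by exists x, y.
exists 2 => _ [x' [y' [sx' sy' _ ->]]].
rewrite /l1_norm (le_trans (ler_sum _ (fun i _ => ler_normB (F x' i) (F y' i)))) //.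
by rewrite big_split /= -!/(l1_norm _) !F_sphere.
Qed.

End Norms.

Section FlipDrift.
Variables (R : realFieldType) (T I : finType).
Variables (lvl : {set T} -> I -> nat) (mu : {set T} -> I -> R).
Implicit Types (B : {set T}) (t : T) (i : I).

Definition drift B t i : R :=
  (lvl (flip B t) i < lvl B i)%N%:R - (lvl B i < lvl (flip B t) i)%N%:R.

Lemma drift_flip B t i : drift (flip B t) t i = - drift B t i.
Proof. by rewrite /drift flipK opprB. Qed.

Lemma drift_mul_le B t i (x : R) : drift B t i * x <= `|x|.
Proof.
rewrite /drift; case: ltnP => [lt|_]; case: ltnP => [lt'|_] //=.
- by have := ltn_trans lt lt'; rewrite ltnn.
- by rewrite subr0 mul1r ler_norm.
- by rewrite sub0r mulN1r -normrN ler_norm.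
- by rewrite subrr mul0r.
Qed.

Lemma sum_drift_flip :
  \sum_B \sum_t \sum_i drift B t i * mu (flip B t) i =
  - \sum_B \sum_t \sum_i drift B t i * mu B i.
Proof.
rewrite exchange_big [in RHS]exchange_big -sumrN; apply: eq_bigr => t _ /=.
rewrite (reindex_inj (inv_inj (flipK t))) -sumrN; apply: eq_bigr => B _.
by rewrite flipK -sumrN; apply: eq_bigr => i _; rewrite drift_flip mulNr.
Qed.

Hypotheses (mu_ge0 : forall B i, 0 <= mu B i) (sum_mu : forall B, \sum_i mu B i = 1).
Hypothesis mu_lvl0 : forall B i, lvl B i = 0%N -> mu B i = 0.
Variable c : R.
Hypothesis drift_ge : forall B i, (0 < lvl B i)%N -> c <= \sum_t drift B t i.

Lemma sum_drift_mu_ge B : c <= \sum_t \sum_i drift B t i * mu B i.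
Proof.
rewrite exchange_big -[c]mulr1 -(sum_mu B) mulr_sumr; apply: ler_sum => i _ /=.
rewrite -mulr_suml; have [/mu_lvl0 ->|/drift_ge] := posnP (lvl B i).
  by rewrite !mulr0.
exact/ler_wpM2r/mu_ge0.
Qed.

Lemma sum_flip_dist_ge :
  c *+ 2 *+ #|{set T}| <= \sum_B \sum_t \sum_i `|mu B i - mu (flip B t) i|.
Proof.
have -> : \sum_B \sum_t \sum_i `|mu B i - mu (flip B t) i| =
          \sum_B \sum_t \sum_i drift B t i * mu B i
          - \sum_B \sum_t \sum_i drift B t i * mu (flip B t) i
          + \sum_B \sum_t \sum_i (`|mu B i - mu (flip B t) i|
                                  - drift B t i * (mu B i - mu (flip B t) i)).
  rewrite -!sumrB -!big_split /=; apply: eq_bigr => B _; rewrite -!sumrB -!big_split /=.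
  apply: eq_bigr => t _; rewrite -!sumrB -!big_split /=; apply: eq_bigr => i _.
  by rewrite mulrBr addrC subrK.
rewrite -sumr_const sum_drift_flip opprK sumrMnl mulr2n ler_wpDr //.
  apply: sumr_ge0 => B _; apply: sumr_ge0 => t _; apply: sumr_ge0 => i _.
  by rewrite subr_ge0 drift_mul_le.
by rewrite lerD // ler_sum // => B _; exact: sum_drift_mu_ge.
Qed.

Lemma exists_flip_dist_ge : (0 < #|T|)%N ->
  exists B t, c *+ 2 / #|T|%:R <= \sum_i `|mu B i - mu (flip B t) i|.
Proof.
move=> T_gt0; have [|B hB] := exists_ge_of_sum_ge _ sum_flip_dist_ge.
  by apply/card_gt0P; exists [set: T].
exists B; apply: exists_ge_of_sum_ge => //.
by rewrite -[leLHS]mulr_natr divfK // pnatr_eq0 -lt0n.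
Qed.

End FlipDrift.

Arguments drift {R T I}.

Section LevelVectors.
Variables (R : realType) (d k : nat) (p : 'I_k -> {set 'I_(3 * d)}).
Hypotheses (d_gt0 : (0 < d)%N) (p_surj : forall B, exists i, p i = B).
Implicit Types (B : {set 'I_(3 * d)}) (t : 'I_(3 * d)) (i : 'I_k).

Definition level B i : nat := (#|symdiff (p i) B| - 2 * d)%N.
Definition level_vec B i : R := (level B i)%:R / d%:R.

Lemma level_le B i : (level B i <= d)%N.
Proof. by rewrite /level; have := max_card (symdiff (p i) B); rewrite card_ord; lia. Qed.

Lemma level_setC B : exists i, level B i = d.
Proof.
by have [i hi] := p_surj (~: B); exists i; rewrite /level hi symdiff_setC cardsT card_ord; lia.
Qed.

Lemma level_flip_dist B t i : `|(level B i)%:R - (level (flip B t) i)%:R : R| <= 1.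
Proof.
have [h1 h2] : (level B i <= (level (flip B t) i).+1)%N /\ (level (flip B t) i <= (level B i).+1)%N.
  by rewrite /level symdiff_flip card_flip; case: ifP; lia.
move: h1 h2; rewrite -!(ler_nat R) !mulrSr => h1 h2.
by rewrite ler_norml; apply/andP; split; lra.
Qed.

Lemma level_vec_ge0 B i : 0 <= level_vec B i.
Proof. by rewrite divr_ge0 ?ler0n. Qed.

Lemma level_vec_sphere B : sphere_inf (level_vec B).
Proof.
have d_pos : (0 : R) < d%:R by rewrite ltr0n.
apply/eqP; rewrite eq_le; apply/andP; split.
  apply: linf_norm_le => // i; rewrite ger0_norm ?level_vec_ge0 //.
  by rewrite ler_pdivrMr // mul1r ler_nat level_le.
have [i hi] := level_setC B; apply: le_trans (ler_linf_norm _ i).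
by rewrite ger0_norm ?level_vec_ge0 // /level_vec hi divff // gt_eqF.
Qed.

Lemma level_vec_eq0 B i : (level_vec B i == 0) = (level B i == 0%N).
Proof. by rewrite mulf_eq0 invr_eq0 !pnatr_eq0 (gtn_eqF d_gt0) orbF. Qed.

Lemma level_vec_flip_near B t :
  linf_norm (fun i => level_vec B i - level_vec (flip B t) i) <= d%:R^-1.
Proof.
apply: linf_norm_le => [|i]; first by rewrite invr_ge0 ler0n.
rewrite -mulrBl normrM [`|_^-1|]ger0_norm ?invr_ge0 ?ler0n //.
by rewrite ler_piMl ?invr_ge0 ?ler0n // level_flip_dist.
Qed.

Lemma drift_level B i : (0 < level B i)%N -> d%:R <= \sum_t drift level B t i :> R.
Proof.
rewrite /level; set S := symdiff (p i) B => S_big.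
have drift_S t : drift level B t i = (t \in S)%:R *+ 2 - 1 :> R.
  rewrite /drift /level symdiff_flip card_flip -/S.
  case: ifP => tS /=.
    have [-> ->] : (#|S|.-1 - 2 * d < #|S| - 2 * d)%N /\
                   (#|S| - 2 * d < #|S|.-1 - 2 * d)%N = false by split; lia.
    by rewrite /= mulr2n; lra.
  have [-> ->] : (#|S|.+1 - 2 * d < #|S| - 2 * d)%N = false /\
                 (#|S| - 2 * d < #|S|.+1 - 2 * d)%N by split; lia.
  by rewrite /= mulr2n; lra.
have card_S : \sum_t ((t \in S)%:R : R) = #|S|%:R.
  by rewrite -sumr_const [RHS]big_mkcond; apply: eq_bigr => t _; case: (t \in S).
rewrite (eq_bigr _ (fun t _ => drift_S t)) sumrB sumrMnl card_S sumr_const card_ord.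
have : ((2 * d).+1)%:R <= #|S|%:R :> R by rewrite ler_nat; lia.
by rewrite mulrSr !natrM; lra.
Qed.

End LevelVectors.

Lemma support_preserving_far_pair (R : realType) (d k : nat)
    (F : ('I_k -> R) -> 'I_k -> R) :
  (0 < d)%N -> (2 ^ (3 * d) <= k)%N -> maps_sphere F -> support_preserving F ->
  exists x y, [/\ sphere_inf x, sphere_inf y,
    linf_norm (fun i => x i - y i) <= d%:R^-1 &
    2^-1 <= l1_norm (fun i => F x i - F y i)].
Proof.
move=> d_gt0 k_big F_sphere F_supp.
have [p p_surj] : exists p : 'I_k -> {set 'I_(3 * d)}, forall B, exists i, p i = B.
  by apply: (ord_surjection [set: _]); rewrite card_sets card_ord.
pose x := level_vec R p.
pose mu B i := `|F (x B) i|.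
have mu_level0 B i : level p B i = 0%N -> mu B i = 0.
  move=> /eqP; rewrite -(level_vec_eq0 R p d_gt0) => x_B_i0.
  have := F_supp _ (level_vec_sphere R d_gt0 p_surj B) i.
  by rewrite x_B_i0 => /negbFE/eqP; rewrite /mu => ->; rewrite normr0.
have [|B [t far]] := exists_flip_dist_ge (mu := mu) (fun B i => normr_ge0 _)
  (fun B => F_sphere _ (level_vec_sphere R d_gt0 p_surj B)) mu_level0
  (fun B i => @drift_level R d k p d_gt0 B i); first by rewrite card_ord muln_gt0.
have x_sphere := level_vec_sphere R d_gt0 p_surj.
exists (x B), (x (flip B t)).
split; [exact: x_sphere | exact: x_sphere | exact: level_vec_flip_near |].
apply: le_trans (le_trans far (ler_sum _ (fun i _ => ler_dist_dist _ _))).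
have d_pos : (0 : R) < d%:R by rewrite ltr0n.
by rewrite card_ord natrM ler_pdivlMr ?mulr_gt0 ?ltr0n //; lra.
Qed.

Lemma omega_ge_half (R : realType) (d k : nat) (F : ('I_k -> R) -> 'I_k -> R) (t : R) :
  (0 < d)%N -> (2 ^ (3 * d) <= k)%N -> d%:R^-1 <= t ->
  maps_sphere F -> support_preserving F -> 2^-1 <= omega F t.
Proof.
move=> d_gt0 k_big d_t F_sphere F_supp.
have [x [y [sx sy near far]]] := support_preserving_far_pair d_gt0 k_big F_sphere F_supp.
exact: le_trans far (l1_dist_le_omega F_sphere sx sy (le_trans near d_t)).
Qed.

Lemma expn_threshold d : (0 < d)%N -> (2 ^ (3 * d) <= 19 ^ (2 * d - 1) + 1)%N.
Proof.
move=> d_gt0; rewrite expnM (leq_trans _ (leq_addr 1 _)) //.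
apply: (@leq_trans (19 ^ d)); first by rewrite leq_exp2r.
by apply: leq_pexp2l => //; lia.
Qed.

Theorem theorem4p4 (R : realType) (d : nat) (hd : (0 < d)%N) :
  (forall (k : nat), (19 ^ (2 * d - 1) + 1 <= k)%N ->
     forall F : ('I_k -> R) -> ('I_k -> R),
       maps_sphere F -> support_preserving F ->
       omega F (d%:R)^-1 >= 2^-1)
  /\
  ~ (exists Fk : forall k : nat, ('I_k -> R) -> ('I_k -> R),
       (forall k : nat, (0 < k)%N -> maps_sphere (Fk k) /\ support_preserving (Fk k)) /\
       (forall eps : R, 0 < eps -> exists delta : R, 0 < delta /\
          forall k : nat, (0 < k)%N -> omega (Fk k) delta < eps)).
Proof.
split.
  move=> k k_big F; apply: (omega_ge_half hd _ (lexx _)).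
  exact: leq_trans (expn_threshold hd) k_big.
case=> Fk [Fk_sphere_supp Fk_equi].
have [|delta [delta_gt0 Fk_delta]] := Fk_equi 2^-1; first by rewrite invr_gt0.
have [e e_gt0 e_delta] := exists_inv_nat_le delta_gt0.
have k_gt0 : (0 < 2 ^ (3 * e))%N by rewrite expn_gt0.
have [F_sphere F_supp] := Fk_sphere_supp _ k_gt0.
have := Fk_delta _ k_gt0; rewrite ltNge.
by rewrite (omega_ge_half e_gt0 (leqnn _) e_delta F_sphere F_supp).
Qed.
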